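(* Let $\frac1{\sqrt2}<p<1$. There is $c=c(p)>0$ such that for any $a>0$ and any $n$, any local routing algorithm between the two roots of $TT_n$ (in $TT_{n,p}$) makes at least $a p^{-n}$ queries with probability at least $1-ca$.
   Context: The double binary tree $TT_n$ is obtained by taking two complete binary trees of uniform depth $n$ and identifying their corresponding leaves; its roots are the roots of the two trees. $TT_{n,p}$ is the random subgraph in which each edge is open independently with probability $p$. A routing algorithm between vertices $u,v$ may probe whether edges are open and outputs an open path from $u$ to $v$ if one exists; it is local if the first edge it probes is adjacent to $u$ and subsequently it probes only edges having an endpoint to which it has already established an open path from $u$. The number of queries is considered conditioned on the event that the two roots are connected by an open path. *)

From HB Require Import structures.
From mathcomp Require Import all_boot all_order all_algebra.
From mathcomp Require Import boolp reals.
Set Implicit Arguments. Unset Strict Implicit. Unset Printing Implicit Defensive.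
Import Order.TTheory GRing.Theory Num.Theory.
Local Open Scope ring_scope.

(* Each of the two complete binary trees of depth n is encoded in heap order:*)
(* the root is 1, the children of k are 2k and 2k+1, so the vertices at     *)
(* depth d are the k with 2^d <= k < 2^(d+1), and the leaves are the k with  *)
(* 2^n <= k < 2^(n+1).  A tree is tagged by a side s : bool.                 *)
(* Vertex n := bool * 'I_(2^(n+1)); the vertex (s,k) with 1 <= k < 2^n is    *)
(* the internal vertex k of tree s, and the leaf k (2^n <= k) is represented *)
(* (for both trees, this is the identification of corresponding leaves) by  *)
(* (false,k).  The remaining elements of Vertex n (k = 0, or (true,k) with   *)
(* k a leaf index) are junk and are incident to no edge.                    *)
(* An edge is (s,k) with 2 <= k < 2^(n+1): the edge of tree s between the    *)
(* vertex k and its parent k/2.                                              *)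

Definition Vertex (n : nat) := (bool * 'I_(2 ^ n.+1))%type.

Definition Edge (n : nat) := {e : bool * 'I_(2 ^ n.+1) | (1 < val e.2)%N}.

Definition vtx (n : nat) (s : bool) (k : 'I_(2 ^ n.+1)) : Vertex n :=
  if (2 ^ n <= k)%N then (false, k) else (s, k).

Lemma half_ord_proof (m : nat) (k : 'I_m) : (k./2 < m)%N.
Proof. apply: leq_ltn_trans (ltn_ord k). by rewrite leq_half_double -addnn -addSn leq_addl. Qed.

Definition parent_ord (m : nat) (k : 'I_m) : 'I_m := Ordinal (half_ord_proof k).

Definition eparent (n : nat) (e : Edge n) : Vertex n :=
  vtx (val e).1 (parent_ord (val e).2).
Definition echild (n : nat) (e : Edge n) : Vertex n :=
  vtx (val e).1 (val e).2.

Lemma one_lt_exp2S (n : nat) : (1 < 2 ^ n.+1)%N.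
Proof. by rewrite -[1%N](expn0 2) ltn_exp2l. Qed.

Definition one_ord (n : nat) : 'I_(2 ^ n.+1) := Ordinal (one_lt_exp2S n).

Definition root0 (n : nat) : Vertex n := (false, one_ord n).
Definition root1 (n : nat) : Vertex n := (true, one_ord n).

Definition adj (n : nat) (S : pred (Edge n)) : rel (Vertex n) :=
  fun x y => [exists e : Edge n, S e &&
     (((eparent e == x) && (echild e == y)) || ((eparent e == y) && (echild e == x)))].

Definition conn (n : nat) (S : pred (Edge n)) (x y : Vertex n) : bool :=
  connect (adj S) x y.

Definition config (n : nat) := {ffun Edge n -> bool}.

Definition weight (R : realType) (p : R) (n : nat) (w : config n) : R :=
  \prod_(e : Edge n) (if w e then p else 1 - p).

Definition Pr (R : realType) (p : R) (n : nat) (A : config n -> Prop) : R :=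
  \sum_(w : config n) (if `[< A w >] then weight p w else 0).

Definition condPr (R : realType) (p : R) (n : nat) (A C : config n -> Prop) : R :=
  Pr p (fun w => A w /\ C w) / Pr p C.

Definition roots_connected (n : nat) (w : config n) : Prop :=
  conn (fun e => w e) (root0 n) (root1 n).

(* A history is the list of the edges probed so far with their states.      *)
(* An algorithm maps the history to the next edge to probe, or None (stop). *)

Definition history (n : nat) := seq (Edge n * bool).

Definition algorithm (n : nat) := history n -> option (Edge n).

Fixpoint hist (n : nat) (alg : algorithm n) (w : config n) (k : nat) : history n :=
  match k with
  | 0 => [::]
  | k.+1 => let h := hist alg w k in
            match alg h with Some e => rcons h (e, w e) | None => h end
  end.

Definition known_open (n : nat) (h : history n) : pred (Edge n) :=
  fun e => (e, true) \in h.

(* local: every probed edge has an endpoint to which an open path from the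
   start root0 has already been established (for the first probe, the
   history is empty and this means the edge is adjacent to root0) *)
Definition local_alg (n : nat) (alg : algorithm n) : Prop :=
  forall (w : config n) (k : nat) (e : Edge n),
    alg (hist alg w k) = Some e ->
    conn (known_open (hist alg w k)) (root0 n) (eparent e) ||
    conn (known_open (hist alg w k)) (root0 n) (echild e).

(* routing algorithm between the two roots: on every configuration it stops,
   and when it stops, if the roots are connected by an open path, the probed
   open edges contain such a path (which it outputs) *)
Definition routes_roots (n : nat) (alg : algorithm n) : Prop :=
  forall w : config n, exists k : nat,
    alg (hist alg w k) = None /\
    (roots_connected w -> conn (known_open (hist alg w k)) (root0 n) (root1 n)).

(* alg makes at least x queries on w: for every natural k < x, a (k+1)-th
   query is made (i.e. the number of queries Q satisfies Q >= x) *)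
Definition at_least_queries (R : realType) (n : nat) (alg : algorithm n)
    (w : config n) (x : R) : Prop :=
  forall k : nat, (k%:R < x)%R -> alg (hist alg w k) <> None.

(* Before a local algorithm started at [root0] can exhibit an open path to [root1], it must
   for the first time probe an open edge touching a vertex whose upward path in the tree
   [true] is open.  By locality the other endpoint of that edge is reached from [root0], so
   the edge is a leaf edge of the tree [false] whose leaf has an open, never probed, upward
   path of [n] edges in the tree [true].  These edges are independent of the history, so this
   happens at a given step with probability at most [p ^ n], and the roots get connected within
   [x] queries with probability at most [x p ^ n].  On the other hand, with probability at
   least [q = (2 p^2 - 1) / p^4 > 0] there is a root-to-leaf path open in both trees, so the
   roots are connected with probability at least [q]; hence the conditional probability of
   routing with fewer than [a p ^ -n] queries is at most [a / q]. *)

From Pilot Require Import Defs.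
From HB Require Import structures.
From mathcomp Require Import all_boot all_order all_algebra.
From mathcomp Require Import boolp reals.
From mathcomp Require Import zify ring lra.
Import Order.TTheory GRing.Theory Num.Theory.

Set Implicit Arguments. Unset Strict Implicit. Unset Printing Implicit Defensive.

Section ProductMeasure.
Local Open Scope ring_scope.
Variables (R : realType) (p : R) (n : nat).
Local Notation cfg := (config n).

Definition edge_prob (b : bool) : R := if b then p else 1 - p.

Definition indicator (E : cfg -> Prop) (w : cfg) : R := if `[< E w >] then 1 else 0.

Lemma PrE (E : cfg -> Prop) : Pr p E = \sum_w indicator E w * weight p w.
Proof. by apply: eq_bigr => w _; rewrite /indicator; case: ifP; rewrite ?mul1r ?mul0r. Qed.

Lemma eq_Pr (E F : cfg -> Prop) : (forall w, E w <-> F w) -> Pr p E = Pr p F.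
Proof.
move=> EF; apply: eq_bigr => w _.
by have -> : `[< E w >] = `[< F w >] by apply/asboolP/asboolP => /EF.
Qed.

Lemma edge_probC b : edge_prob b + edge_prob (~~ b) = 1.
Proof. by case: b; rewrite /edge_prob /= ?subrK // addrC subrK. Qed.

Lemma Pr_True : Pr p (fun _ : cfg => True) = 1.
Proof.
rewrite /Pr (eq_bigr (fun w => weight p w)); last by move=> w _; rewrite asboolT.
rewrite /weight -(bigA_distr_bigA (fun (e : Edge n) (b : bool) => edge_prob b)).
by apply: big1 => e _; rewrite big_bool /= addrC subrK.
Qed.

Lemma Pr_False : Pr p (fun _ : cfg => False) = 0.
Proof. by apply: big1 => w _; rewrite asboolF. Qed.

Lemma Pr_split (E F : cfg -> Prop) :
  Pr p E = Pr p (fun w => E w /\ F w) + Pr p (fun w => E w /\ ~ F w).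
Proof.
rewrite /Pr -big_split; apply: eq_bigr => w _ /=.
case: (asboolP (E w)) => hE; case: (asboolP (F w)) => hF.
- by rewrite asboolT // asboolF ?addr0 // => -[].
- by rewrite asboolF ?asboolT ?add0r // => -[].
- by rewrite !asboolF ?addr0 // => -[].
- by rewrite !asboolF ?addr0 // => -[].
Qed.

Definition cfg_set (g : Edge n) (b : bool) (w : cfg) : cfg :=
  [ffun e => if e == g then b else w e].

Lemma cfg_setE g b (w : cfg) e : cfg_set g b w e = if e == g then b else w e.
Proof. by rewrite ffunE. Qed.

Lemma cfg_set_id g b (w : cfg) : w g = b -> cfg_set g b w = w.
Proof. by move=> wg; apply/ffunP => e; rewrite cfg_setE; case: eqP => // ->. Qed.

Lemma cfg_setK g b c (w : cfg) : cfg_set g b (cfg_set g c w) = cfg_set g b w.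
Proof. by apply/ffunP => e; rewrite !cfg_setE; case: eqP. Qed.

Definition weight_but (g : Edge n) (w : cfg) : R := \prod_(e | e != g) edge_prob (w e).

Lemma weightD1 g (w : cfg) : weight p w = edge_prob (w g) * weight_but g w.
Proof. by rewrite /weight (bigD1 g). Qed.

Lemma weight_but_set g b (w : cfg) : weight_but g (cfg_set g b w) = weight_but g w.
Proof. by apply: eq_bigr => e /negPf he; rewrite cfg_setE he. Qed.

(* Forcing the state of g pairs [w] with [cfg_set g (~~ b) w]; the two weights add up to
   [weight_but g w]. *)
Lemma Pr_cfg_set g (E : cfg -> Prop) b :
  Pr p (fun w => E (cfg_set g b w)) =
  \sum_(w : cfg | w g == b) indicator E w * weight_but g w.
Proof.
rewrite PrE (bigID (fun w : cfg => w g == b)) /=.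
have flipK : involutive (fun w : cfg => cfg_set g (~~ w g) w).
  by move=> w; rewrite cfg_setE eqxx negbK cfg_setK cfg_set_id.
rewrite [X in _ + X](reindex_inj (can_inj flipK)) /=.
rewrite [X in _ + X](eq_bigl (fun w : cfg => w g == b)); last first.
  by move=> w; rewrite cfg_setE eqxx; case: (w g); case: b.
rewrite -[RHS]mulr1 -(edge_probC b) big_distrl /= -!big_split /=.
apply: eq_bigr => w /eqP wg.
rewrite (weightD1 g) (weightD1 g (cfg_set _ _ w)) weight_but_set cfg_setE eqxx wg.
rewrite /indicator cfg_setK !cfg_set_id //.
by case: asboolP => _; rewrite ?mul1r ?mul0r ?add0r // mulrDr !(mulrC _ (weight_but g w)).
Qed.

Lemma Pr_condition_edge g (E : cfg -> Prop) :
  Pr p E = p * Pr p (fun w => E (cfg_set g true w))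
         + (1 - p) * Pr p (fun w => E (cfg_set g false w)).
Proof.
rewrite !Pr_cfg_set PrE (bigID (fun w : cfg => w g)) /= !big_distrr /=.
congr (_ + _); apply: eq_big => w.
- by case: (w g).
- by move=> wg; rewrite (weightD1 g) wg /edge_prob mulrCA.
- by case: (w g).
- by move=> /negPf wg; rewrite (weightD1 g) wg /edge_prob mulrCA.
Qed.

Definition depends_on (U : Edge n -> Prop) (F : cfg -> Prop) :=
  forall w w' : cfg, (forall e, U e -> w e = w' e) -> F w -> F w'.

Lemma depends_on_sub (U V : Edge n -> Prop) F :
  (forall e, U e -> V e) -> depends_on U F -> depends_on V F.
Proof. by move=> UV dF w w' ww'; apply: dF => e /UV; apply: ww'. Qed.

Lemma depends_onE U F : depends_on U F ->
  forall w w' : cfg, (forall e, U e -> w e = w' e) -> (F w <-> F w').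
Proof. by move=> dF w w' ww'; split; apply: dF => // e /ww' ->. Qed.

Lemma Pr_indep_seq (s : seq (Edge n)) (F G : cfg -> Prop) :
  depends_on (fun e => e \in s) G -> depends_on (fun e => e \notin s) F ->
  Pr p (fun w => F w /\ G w) = Pr p F * Pr p G.
Proof.
elim: s F G => [|g s IH] F G dG dF.
  have [[w0 Gw0]|noG] := pselect (exists w, G w).
    have Gw w : G w by apply: (dG w0).
    rewrite (@eq_Pr G (fun _ => True)) ?Pr_True ?mulr1; last by [].
    by apply: eq_Pr => w; split=> [[]|].
  rewrite (@eq_Pr G (fun _ => False)) ?Pr_False ?mulr0; last first.
    by move=> w; split=> // Gw; apply: noG; exists w.
  by rewrite -Pr_False; apply: eq_Pr => w; split=> // -[_ Gw]; apply: noG; exists w.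
have Fset b w : F (cfg_set g b w) <-> F w.
  apply: (depends_onE dF) => e; rewrite inE negb_or => /andP [/negPf eg _].
  by rewrite cfg_setE eg.
have dF' : depends_on (fun e => e \notin s) F.
  move=> w w' ww' Fw; apply: (dF (cfg_set g (w' g) w)); last exact/Fset.
  move=> e; rewrite inE negb_or => /andP [/negPf eg es].
  by rewrite cfg_setE eg ww'.
have dG' b : depends_on (fun e => e \in s) (fun w => G (cfg_set g b w)).
  move=> w w' ww'; apply: dG => e; rewrite inE !cfg_setE.
  by case: eqP => //= _ es; rewrite ww'.
rewrite (Pr_condition_edge g) (Pr_condition_edge g G).
rewrite (eq_Pr (F := fun w => F w /\ G (cfg_set g true w))); last by move=> w; rewrite Fset.
rewrite (eq_Pr (E := fun w => _ (cfg_set g false w) /\ _)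
               (F := fun w => F w /\ G (cfg_set g false w))); last by move=> w; rewrite Fset.
by rewrite !IH // mulrDr; congr (_ + _); rewrite mulrCA.
Qed.

Lemma Pr_indep (U : Edge n -> Prop) (F G : cfg -> Prop) :
  depends_on U G -> depends_on (fun e => ~ U e) F ->
  Pr p (fun w => F w /\ G w) = Pr p F * Pr p G.
Proof.
move=> dG dF; apply: (@Pr_indep_seq [seq e <- enum predT | `[< U e >]]).
  by apply: depends_on_sub dG => e ?; rewrite mem_filter mem_enum andbT; apply/asboolP.
apply: depends_on_sub dF => e Ue; rewrite mem_filter mem_enum andbT.
by apply/negP => /asboolP.
Qed.

Lemma Pr_open (g : Edge n) : Pr p (fun w : cfg => w g) = p.
Proof.
rewrite (Pr_condition_edge g).
rewrite (@eq_Pr (fun w => cfg_set g true w g) (fun _ => True)); last first.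
  by move=> w; rewrite cfg_setE eqxx.
rewrite (@eq_Pr (fun w => cfg_set g false w g) (fun _ => False)); last first.
  by move=> w; rewrite cfg_setE eqxx.
by rewrite Pr_True Pr_False mulr1 mulr0 addr0.
Qed.

Lemma Pr_open_and (g : Edge n) (G : cfg -> Prop) :
  depends_on (fun e => e <> g) G -> Pr p (fun w => w g /\ G w) = p * Pr p G.
Proof.
move=> dG; rewrite (Pr_indep (U := fun e => e <> g)) // ?Pr_open //.
by move=> w w' ww'; rewrite ww'.
Qed.

Lemma Pr_or_indep (U : Edge n -> Prop) (F G : cfg -> Prop) :
  depends_on U G -> depends_on (fun e => ~ U e) F ->
  Pr p (fun w => F w \/ G w) = Pr p F + Pr p G - Pr p F * Pr p G.
Proof.
move=> dG dF; rewrite -(Pr_indep dG dF) (Pr_split _ F) (Pr_split G F).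
rewrite (@eq_Pr (fun w => (F w \/ G w) /\ F w) F); last by move=> w; tauto.
rewrite (@eq_Pr (fun w => (F w \/ G w) /\ ~ F w) (fun w => G w /\ ~ F w)); last first.
  by move=> w; tauto.
by rewrite (@eq_Pr (fun w => G w /\ F w) (fun w => F w /\ G w)); [lra | move=> w; tauto].
Qed.

Hypotheses (p_ge0 : 0 <= p) (p_le1 : p <= 1).

Lemma weight_ge0 (w : cfg) : 0 <= weight p w.
Proof. by apply: prodr_ge0 => e _; case: (w e); rewrite ?subr_ge0. Qed.

Lemma le_Pr (E F : cfg -> Prop) : (forall w, E w -> F w) -> Pr p E <= Pr p F.
Proof.
move=> EF; rewrite !PrE; apply: ler_sum => w _; apply: ler_wpM2r; first exact: weight_ge0.
rewrite /indicator; case: (asboolP (E w)) => [/EF Fw|_]; first by rewrite asboolT.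
by case: ifP.
Qed.

Lemma Pr_ge0 (E : cfg -> Prop) : 0 <= Pr p E.
Proof. by rewrite -Pr_False; apply: le_Pr => w []. Qed.

Lemma Pr_le1 (E : cfg -> Prop) : Pr p E <= 1.
Proof. by rewrite -Pr_True; apply: le_Pr. Qed.

Lemma Pr_exists_le (I : finType) (E : I -> cfg -> Prop) :
  Pr p (fun w => exists i, E i w) <= \sum_i Pr p (E i).
Proof.
rewrite PrE (eq_bigr (fun i => \sum_w indicator (E i) w * weight p w)); last first.
  by move=> i _; rewrite PrE.
rewrite exchange_big /=; apply: ler_sum => w _; rewrite -big_distrl /=.
apply: ler_wpM2r; first exact: weight_ge0.
rewrite /indicator; case: asboolP => [[i Eiw]|_]; last by apply: sumr_ge0 => i _; case: ifP.
by rewrite (bigD1 i) //= asboolT // lerDl; apply: sumr_ge0 => j _; case: ifP.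
Qed.

Lemma sum_Pr_Some_le1 (T : finType) (o : cfg -> option T) :
  \sum_x Pr p (fun w => o w = Some x) <= 1.
Proof.
rewrite -Pr_True PrE.
rewrite (eq_bigr (fun x => \sum_w indicator (fun w => o w = Some x) w * weight p w)); last first.
  by move=> x _; rewrite PrE.
rewrite exchange_big /=; apply: ler_sum => w _; rewrite -big_distrl /=.
apply: ler_wpM2r; first exact: weight_ge0.
rewrite /indicator asboolT //; case ow: (o w) => [x|]; last first.
  by rewrite big1 // => y _; rewrite asboolF.
rewrite (bigD1 x) //= asboolT // big1 ?addr0 // => y /negPf yx.
by rewrite asboolF // => -[] /eqP; rewrite eq_sym yx.
Qed.

End ProductMeasure.

Section DoubleTree.
Variable n : nat.
Local Notation cfg := (config n).

Definition edge_at (s : bool) (m : nat) : option (Edge n) :=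
  if insub m is Some i then insub (s, i) else None.

Definition open_at (w : cfg) (s : bool) (m : nat) : bool :=
  if edge_at s m is Some e then w e else false.

Lemma edge_at_val (e : Edge n) : edge_at (val e).1 (val e).2 = Some e.
Proof. by rewrite /edge_at valK; case: e => [[s i] /= i_gt1]; rewrite insubT. Qed.

Lemma open_at_val (w : cfg) (e : Edge n) : open_at w (val e).1 (val e).2 = w e.
Proof. by rewrite /open_at edge_at_val. Qed.

Lemma edge_at_Some s m e : edge_at s m = Some e -> (val e).1 = s /\ val (val e).2 = m.
Proof.
rewrite /edge_at; case: insubP => // i _ im; case: insubP => // x _ xi [<-].
by rewrite xi /= im.
Qed.

Lemma edge_at_exists s m : (1 < m < 2 ^ n.+1)%N -> exists e, edge_at s m = Some e.
Proof. by case/andP => m_gt1 m_lt; rewrite /edge_at insubT /= insubT /=; eexists. Qed.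

Lemma open_at_depends s m :
  depends_on (fun e : Edge n => val (val e).2 = m) (fun w => open_at w s m).
Proof.
move=> w w' ww'; rewrite /open_at; case em: edge_at => [e|] //.
by have [_ em'] := edge_at_Some em; rewrite ww'.
Qed.

(* Out-of-range indices are sent to the root. *)
Definition vertex_at (s : bool) (m : nat) : Vertex n :=
  (s && (m < 2 ^ n)%N, insubd (one_ord n) m).

Lemma vtxE s (i : 'I_(2 ^ n.+1)) : vtx s i = vertex_at s i.
Proof. by rewrite /vtx /vertex_at valKd leqNgt; case: ltnP; rewrite ?andbT ?andbF. Qed.

Lemma eparentE (e : Edge n) : eparent e = vertex_at (val e).1 (val (val e).2)./2.
Proof. by rewrite /eparent vtxE. Qed.

Lemma echildE (e : Edge n) : echild e = vertex_at (val e).1 (val (val e).2).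
Proof. by rewrite /echild vtxE. Qed.

Lemma vertex_at_val s m : (m < 2 ^ n.+1)%N -> val (vertex_at s m).2 = m.
Proof. by move=> m_lt; rewrite /= val_insubd m_lt. Qed.

Lemma vertex_at1 s : (0 < n)%N -> vertex_at s 1 = (s, one_ord n).
Proof.
move=> n_gt0; rewrite /vertex_at -[X in (X < _)%N](expn0 2) ltn_exp2l // n_gt0 andbT.
by congr pair; apply: val_inj; rewrite val_insubd one_lt_exp2S.
Qed.

Lemma adj_open_edge (S : pred (Edge n)) g :
  S g -> adj S (eparent g) (echild g) /\ adj S (echild g) (eparent g).
Proof. by move=> Sg; split; apply/existsP; exists g; rewrite Sg !eqxx /= ?orbT. Qed.

Lemma conn_endpoint (S : pred (Edge n)) x y : conn S x y ->
  y = x \/ exists g, S g /\ (eparent g = y \/ echild g = y).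
Proof.
case/connectP => q; case/lastP: q => [|q z] /=; first by move=> _ ->; left.
rewrite rcons_path last_rcons => /andP [_ /existsP [g /andP [Sg gz]]] ->; right.
by exists g; split => //; case/orP: gz => /andP [/eqP pg /eqP cg]; [right|left].
Qed.

Definition up_open (w : cfg) (m : nat) : Prop :=
  forall i, (1 < m %/ 2 ^ i)%N -> open_at w true (m %/ 2 ^ i).

Lemma up_openS w m :
  up_open w m <-> ((1 < m)%N -> open_at w true m) /\ up_open w m./2.
Proof.
split=> [up_m|[open_m up_half] [|i]].
- split=> [m_gt1|i]; first by have := up_m 0%N; rewrite expn0 divn1; apply.
  by rewrite -divn2 -divnMA -expnS; apply: up_m.
- by rewrite expn0 divn1.
- by rewrite expnS divnMA divn2; apply: up_half.
Qed.

Lemma up_open_le1 w m : (m <= 1)%N -> up_open w m.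
Proof. by move=> m_le1 i; rewrite ltnNge (leq_trans (leq_div _ _) m_le1). Qed.

Lemma up_open_div w m i : up_open w m -> up_open w (m %/ 2 ^ i).
Proof. by move=> up_m j; rewrite -divnMA -expnD; apply: up_m. Qed.

Definition up_edge (m : nat) (e : Edge n) : Prop :=
  (val e).1 = true /\ exists i, val (val e).2 = m %/ 2 ^ i.

Lemma up_open_depends m : depends_on (up_edge m) (fun w => up_open w m).
Proof.
move=> w w' ww' up_m i mi; have := up_m i mi; rewrite /open_at.
case em: edge_at => [e|] //; have [e1 e2] := edge_at_Some em.
by rewrite ww' //; split => //; exists i.
Qed.

(* [v] is a vertex of the tree [true] (leaves carry the tag [false]) whose upward path to
   [root1] is open. *)
Definition linked_root1 (w : cfg) (v : Vertex n) : Prop :=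
  (v.1 || (2 ^ n <= val v.2)%N) /\ up_open w (val v.2).

Lemma linked_root1_vertex_at w s m : (m < 2 ^ n.+1)%N ->
  linked_root1 w (vertex_at s m) <-> (s || (2 ^ n <= m)%N) /\ up_open w m.
Proof.
move=> m_lt; rewrite /linked_root1 vertex_at_val //=.
have -> // : (s && (m < 2 ^ n)%N) || (2 ^ n <= m)%N = s || (2 ^ n <= m)%N.
by case: s; case: ltnP.
Qed.

(* An open edge leaving the vertices linked to [root1] can only be an edge of the tree
   [false] ending at a leaf: inside the tree [true] an open edge propagates the link. *)
Lemma linked_root1_boundary (w : cfg) (e : Edge n) : w e ->
  linked_root1 w (eparent e) \/ linked_root1 w (echild e) ->
  ~ linked_root1 w (eparent e) \/ ~ linked_root1 w (echild e) ->
  (val e).1 = false /\ (2 ^ n <= val (val e).2)%N /\ up_open w (val (val e).2).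
Proof.
move=> we; have open_e := open_at_val w e; rewrite we in open_e.
have k_gt1 : (1 < val (val e).2)%N := valP e.
have k_lt : (val (val e).2 < 2 ^ n.+1)%N := ltn_ord _.
rewrite eparentE echildE; move: open_e k_gt1 k_lt.
case: (val e) => s i /=; move: (nat_of_ord i) => k open_k k_gt1 k_lt.
have half_lt : (k./2 < 2 ^ n)%N by move: k_lt; rewrite expnS; lia.
rewrite !linked_root1_vertex_at //; last by lia.
rewrite (up_openS w k) (leqNgt _ k./2) half_lt orbF.
case: s open_k => open_k /= linked unlinked.
  have up_half : up_open w k./2 by case: linked => [[_ up] | [_ [_ up]]].
  by exfalso; case: unlinked; apply; do !split.
by case: linked => -[] // _ [leaf up]; do !split.
Qed.

Lemma divn_exp2_le_half x d : (0 < d)%N -> (x %/ 2 ^ d <= x./2)%N.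
Proof.
by move=> d_gt0; rewrite -divn2 leq_div2l // -[X in (X <= _)%N](expn1 2) leq_exp2l.
Qed.

Definition below (k : nat) (e : Edge n) : Prop := exists i, val (val e).2 %/ 2 ^ i = k.

Definition strictly_below (k : nat) (e : Edge n) : Prop :=
  exists i, (0 < i)%N /\ val (val e).2 %/ 2 ^ i = k.

Lemma below_strictly_half m e : below m e -> strictly_below m./2 e.
Proof.
rewrite /below /strictly_below; move: (val _) => x [i xi].
by exists i.+1; rewrite expnS mulnC divnMA xi divn2.
Qed.

Lemma strictly_below_below k e : strictly_below k e -> below k e.
Proof. by case=> i [_ ei]; exists i. Qed.

Lemma strictly_below_neq m e : (0 < m)%N -> strictly_below m e -> val (val e).2 <> m.
Proof.
move=> m_gt0 [i [i_gt0 ei]] em.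
by have := divn_exp2_le_half m i_gt0; rewrite -{1}em ei; lia.
Qed.

Lemma below_sibling k e : (0 < k)%N -> below k.*2.+1 e -> ~ below k.*2 e.
Proof.
rewrite /below; move: (val (val e).2) => x k_gt0 [i xi] [j xj].
have [ij|ji] := leqP i j.
  move: xj; rewrite -(subnKC ij) expnD divnMA xi.
  case: (j - i)%N => [|d]; first by rewrite expn0 divn1; lia.
  by have := divn_exp2_le_half k.*2.+1 (ltn0Sn d); rewrite /= uphalf_double; lia.
move: xi; rewrite -(subnKC (ltnW ji)) expnD divnMA xj.
by have := divn_exp2_le_half k.*2 (d := (i - j)%N) (ltac:(lia)); rewrite doubleK; lia.
Qed.

(* A path of length [h] down from [k] that is open in both trees; at the leaves it joins the
   two copies of [k]. *)
Fixpoint twin_path (w : cfg) (h k : nat) : Prop :=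
  match h with
  | 0 => True
  | h.+1 => (open_at w false k.*2 /\ open_at w true k.*2 /\ twin_path w h k.*2) \/
            (open_at w false k.*2.+1 /\ open_at w true k.*2.+1 /\ twin_path w h k.*2.+1)
  end.

Lemma twin_step_depends h m :
  depends_on (strictly_below m) (fun w => twin_path w h m) ->
  depends_on (below m) (fun w => open_at w false m /\ open_at w true m /\ twin_path w h m).
Proof.
have below_m e : val (val e).2 = m -> below m e by exists 0%N; rewrite expn0 divn1.
move=> dtwin w w' ww' [o0 [o1 tw]]; split; [|split].
- by apply: (open_at_depends (w := w)) o0 => e /below_m /ww'.
- by apply: (open_at_depends (w := w)) o1 => e /below_m /ww'.
- by apply: (dtwin w) tw => e /strictly_below_below /ww'.
Qed.

Lemma twin_path_depends h k : depends_on (strictly_below k) (fun w => twin_path w h k).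
Proof.
elim: h k => [|h IH] k w w' ww' //= [tw|tw]; [left|right].
- apply: (twin_step_depends (IH k.*2) (w := w)) tw => e /below_strictly_half.
  by rewrite doubleK => /ww'.
- apply: (twin_step_depends (IH k.*2.+1) (w := w)) tw => e /below_strictly_half.
  by rewrite /= uphalf_double => /ww'.
Qed.

Lemma conn_twin_step (w : cfg) k m : m./2 = k -> (1 < m < 2 ^ n.+1)%N ->
  open_at w false m -> open_at w true m ->
  conn (fun e => w e) (vertex_at false m) (vertex_at true m) ->
  conn (fun e => w e) (vertex_at false k) (vertex_at true k).
Proof.
move=> mk m_range o0 o1 conn_m.
have [g0 g0m] := edge_at_exists false m_range.
have [g1 g1m] := edge_at_exists true m_range.
have [g0s g0i] := edge_at_Some g0m; have [g1s g1i] := edge_at_Some g1m.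
move: o0 o1; rewrite /open_at g0m g1m => o0 o1.
have [adj0 _] := adj_open_edge (S := fun e => w e) o0.
have [_ adj1] := adj_open_edge (S := fun e => w e) o1.
move: adj0 adj1; rewrite !eparentE !echildE g0s g0i g1s g1i mk => adj0 adj1.
by apply: connect_trans (connect1 adj0) (connect_trans conn_m (connect1 adj1)).
Qed.

Lemma twin_path_conn (w : cfg) h d k : (d + h)%N = n -> (2 ^ d <= k < 2 ^ d.+1)%N ->
  twin_path w h k -> conn (fun e => w e) (vertex_at false k) (vertex_at true k).
Proof.
elim: h d k => [|h IH] d k dh k_range /=.
  move=> _; rewrite addn0 in dh; subst d.
  by rewrite /vertex_at ltnNge; case/andP: k_range => -> _; apply: connect0.
have : (2 ^ d.+2 <= 2 ^ n.+1)%N by rewrite leq_exp2l; lia.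
have pos_d : (0 < 2 ^ d)%N by rewrite expn_gt0.
move: k_range; rewrite !expnS => k_range pow_le.
have IH' m : (k.*2 <= m <= k.*2.+1)%N -> twin_path w h m ->
    conn (fun e => w e) (vertex_at false m) (vertex_at true m).
  by move=> m_range; apply: (IH d.+1); rewrite ?expnS; lia.
case=> [[o0 [o1 tw]]|[o0 [o1 tw]]].
- by apply: (conn_twin_step (m := k.*2)) (IH' _ _ tw); rewrite ?doubleK //; lia.
- by apply: (conn_twin_step (m := k.*2.+1)) (IH' _ _ tw); rewrite /= ?uphalf_double //; lia.
Qed.

Lemma twin_path_roots_connected (w : cfg) :
  (0 < n)%N -> twin_path w n 1 -> roots_connected w.
Proof. by move=> n_gt0 /(@twin_path_conn w n 0 1 erefl erefl); rewrite !vertex_at1. Qed.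

End DoubleTree.

Lemma first_change (P : nat -> Prop) k :
  ~ P 0%N -> P k -> exists2 t, (t < k)%N & ~ P t /\ P t.+1.
Proof.
move=> notP0; elim: k => [//|k IH] Pk1.
have [Pk|notPk] := pselect (P k); last by exists k.
by have [t tk Pt] := IH Pk; exists t => //; apply: ltnW.
Qed.

Section Routing.
Variables (n : nat) (alg : algorithm n).
Local Notation cfg := (config n).

Lemma hist_subset (w : cfg) t x : x \in hist alg w t -> x \in hist alg w t.+1.
Proof. by move=> xt /=; case: (alg _) => // e; rewrite mem_rcons inE xt orbT. Qed.

Lemma hist_state (w : cfg) t g b : (g, b) \in hist alg w t -> b = w g.
Proof.
elim: t => //= t IH; case: (alg _) => // e; rewrite mem_rcons inE.
by case/orP => [/eqP [-> ->]|/IH].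
Qed.

Lemma eq_hist (U : Edge n -> Prop) (w w' : cfg) t :
  (forall e, ~ U e -> w e = w' e) -> (forall x, x \in hist alg w t -> ~ U x.1) ->
  hist alg w' t = hist alg w t.
Proof.
move=> ww'; elim: t => //= t IH notU.
rewrite IH => [|x xt]; last by apply: notU; apply: hist_subset.
case ae: (alg _) => [e|] //; rewrite ww' //.
by apply: (notU (e, w e)); rewrite /= ae mem_rcons mem_head.
Qed.

Lemma hist_stop (w : cfg) k : alg (hist alg w k) = None ->
  forall m, (k <= m)%N -> hist alg w m = hist alg w k.
Proof.
move=> stop; elim=> [|m IH]; first by rewrite leqn0 => /eqP ->.
by rewrite leq_eqVlt => /orP [/eqP <- //|km]; rewrite /= IH // stop.
Qed.

Definition fresh_up (l : nat) (h : history n) : Prop :=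
  forall x, x \in h -> ~ up_edge l x.1.

Definition crossing (t : nat) (w : cfg) : Prop := exists e : Edge n,
  [/\ alg (hist alg w t) = Some e, fresh_up (val (val e).2) (hist alg w t),
      (val e).1 = false, (2 ^ n <= val (val e).2)%N & up_open w (val (val e).2)].

Definition touches_linked (w : cfg) (h : history n) : Prop := exists g,
  known_open h g /\ (linked_root1 w (eparent g) \/ linked_root1 w (echild g)).

Hypothesis n_gt0 : (0 < n)%N.

Lemma root0_not_linked (w : cfg) : ~ linked_root1 w (Defs.root0 n).
Proof.
case=> /= leaf _; move: leaf; rewrite leqNgt.
by have := ltn_exp2l 0 n (isT : (1 < 2)%N); rewrite expn0 n_gt0 => ->.
Qed.

Lemma not_linked_reached (w : cfg) h c : conn (known_open h) (Defs.root0 n) c ->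
  ~ touches_linked w h -> ~ linked_root1 w c.
Proof.
move=> /conn_endpoint [->|[g [gh gc]]] untouched; first exact: root0_not_linked.
move=> linked_c; apply: untouched; exists g; split => //.
by case: gc linked_c => ->; [left|right].
Qed.

Lemma touches_linked_route (w : cfg) h :
  conn (known_open h) (Defs.root0 n) (Defs.root1 n) -> touches_linked w h.
Proof.
move=> /conn_endpoint [[]|[g [gh gr]]] //; exists g; split => //.
have linked_r : linked_root1 w (Defs.root1 n) by split => //; apply: up_open_le1.
by case: gr => ->; [left|right].
Qed.

(* The first probe that touches a vertex linked to [root1] is a crossing: by locality its
   other endpoint is reached from [root0], hence not linked. *)
Lemma crossing_first_touch (w : cfg) t : local_alg alg ->
  ~ touches_linked w (hist alg w t) -> touches_linked w (hist alg w t.+1) ->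
  crossing t w.
Proof.
move=> loc untouched /=; case ae: (alg _) => [e|] // [g [gh linked_g]].
have [ge we] : g = e /\ w e.
  move: gh; rewrite /known_open mem_rcons inE => /orP [/eqP [-> we] // | gt].
  by exfalso; apply: untouched; exists g.
subst g.
have unlinked : ~ linked_root1 w (eparent e) \/ ~ linked_root1 w (echild e).
  by case/orP: (loc w t e ae) => /not_linked_reached /(_ untouched); [left|right].
have [e1 [leaf up]] := linked_root1_boundary we linked_g unlinked.
exists e; split => // -[g b] gb [g1 [i gi]] /=; apply: untouched; exists g.
have wg : w g.
  have g_gt1 : (1 < val (val g).2)%N := valP g.
  by have := up i; rewrite -gi => /(_ g_gt1); rewrite -g1 open_at_val.
split; first by rewrite /known_open -wg -(hist_state gb).
right; rewrite echildE linked_root1_vertex_at ?ltn_ord // g1 gi; split => //.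
exact: up_open_div.
Qed.

Lemma crossing_before_route (w : cfg) k : local_alg alg ->
  conn (known_open (hist alg w k)) (Defs.root0 n) (Defs.root1 n) ->
  exists2 t, (t < k)%N & crossing t w.
Proof.
move=> loc /(touches_linked_route w) touched.
have untouched0 : ~ touches_linked w (hist alg w 0) by case=> g [].
have [t tk [untouched touched1]] :=
  @first_change (fun t => touches_linked w (hist alg w t)) k untouched0 touched.
by exists t => //; apply: crossing_first_touch.
Qed.

End Routing.

Section Estimates.
Local Open Scope ring_scope.
Variables (R : realType) (p : R) (n : nat).
Local Notation cfg := (config n).

Lemma Pr_up_open j m : (2 ^ j <= m < 2 ^ j.+1)%N -> (m < 2 ^ n.+1)%N ->
  Pr p (fun w : cfg => up_open w m) = p ^+ j.
Proof.
elim: j m => [|j IH] m m_range m_lt.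
  rewrite expr0 -(Pr_True p n); apply: eq_Pr => w; split => // _.
  by apply: up_open_le1; move: m_range; rewrite expn0 expn1; lia.
have pos_j : (0 < 2 ^ j)%N by rewrite expn_gt0.
have m_gt1 : (1 < m)%N by move: m_range; rewrite !expnS; lia.
have [g gm] := @edge_at_exists n true m (ltac:(lia)).
have [g1 g2] := edge_at_Some gm.
rewrite (@eq_Pr _ p _ _ (fun w => w g /\ up_open w m./2)); last first.
  by move=> w; rewrite up_openS /open_at gm; split=> [[/(_ m_gt1)]|[? ?]].
rewrite (Pr_indep p (@up_open_depends n m./2)) ?Pr_open.
  by rewrite IH ?exprS //; move: m_range m_lt; rewrite !expnS; lia.
move=> w w' ww'; rewrite ww' // => -[_ [i]]; rewrite g2.
by have := leq_div (m./2) (2 ^ i); lia.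
Qed.

Lemma Pr_twin_step h m : (1 < m < 2 ^ n.+1)%N ->
  Pr p (fun w : cfg => open_at w false m /\ open_at w true m /\ twin_path w h m) =
  p ^+ 2 * Pr p (fun w : cfg => twin_path w h m).
Proof.
move=> m_range; have m_gt0 : (0 < m)%N by lia.
have [g0 g0m] := edge_at_exists false m_range.
have [g1 g1m] := edge_at_exists true m_range.
have [g0s _] := edge_at_Some g0m; have [g1s _] := edge_at_Some g1m.
have dtwin (g : Edge n) :
    val (val g).2 = m -> depends_on (fun e => e <> g) (fun w => twin_path w h m).
  move=> gm w w' ww'; apply: (twin_path_depends (w := w)) => e e_below.
  by apply: ww' => eg; subst e; apply: strictly_below_neq m_gt0 e_below gm.
rewrite (@eq_Pr _ p _ _ (fun w => w g0 /\ (w g1 /\ twin_path w h m))); last first.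
  by move=> w; rewrite /open_at g0m g1m.
rewrite Pr_open_and ?Pr_open_and ?expr2 ?mulrA //.
  exact/dtwin/(proj2 (edge_at_Some g1m)).
move=> w w' ww' [w1 tw]; split.
  by rewrite -ww' // => g10; move: g0s; rewrite -g10 g1s.
exact: (dtwin g0 (proj2 (edge_at_Some g0m)) w).
Qed.

Hypotheses (p_ge0 : 0 <= p) (p_le1 : p <= 1).

(* Freshness makes the history independent of the upward path of the leaf, which is open
   with probability [p ^ n]. *)
Lemma Pr_crossing_le (alg : algorithm n) t : Pr p (crossing alg t) <= p ^+ n.
Proof.
apply: le_trans (Pr_exists_le p_ge0 p_le1 (fun (e : Edge n) (w : cfg) =>
  [/\ alg (hist alg w t) = Some e, fresh_up (val (val e).2) (hist alg w t),
      (val e).1 = false, (2 ^ n <= val (val e).2)%N & up_open w (val (val e).2)])) _.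
apply: le_trans
  (_ : \sum_e Pr p (fun w => alg (hist alg w t) = Some e) * p ^+ n <= _); last first.
  by rewrite -big_distrl /= ler_piMl ?exprn_ge0 ?sum_Pr_Some_le1.
apply: ler_sum => e _; set l := val (val e).2.
have [[e1 leaf]|not_leaf] := pselect ((val e).1 = false /\ (2 ^ n <= l)%N); last first.
  rewrite (@eq_Pr _ p _ _ (fun _ => False)) ?Pr_False ?mulr_ge0 ?Pr_ge0 ?exprn_ge0 //.
  by move=> w; split => // -[]; auto.
rewrite (@eq_Pr _ p _ _ (fun w =>
  (alg (hist alg w t) = Some e /\ fresh_up l (hist alg w t)) /\ up_open w l)); last first.
  by move=> w; split => [[]|[[]]].
rewrite (Pr_indep p (@up_open_depends n l)); last first.
  by move=> w w' ww' [ae fresh]; rewrite (eq_hist ww' fresh).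
rewrite (@Pr_up_open n l) ?ltn_ord //; last by rewrite leaf.
by rewrite ler_wpM2r ?exprn_ge0 //; apply: le_Pr => // w [].
Qed.

End Estimates.

Local Open Scope ring_scope.

Lemma twin_recursion_ge (R : realFieldType) (P q a b : R) :
  0 <= P -> P <= 1 -> 0 <= q -> q <= a -> a <= 1 -> q <= b -> b <= 1 ->
  1 - (1 - P * q) ^+ 2 = q -> q <= P * a + P * b - P * a * (P * b).
Proof.
move=> P_ge0 P_le1 q_ge0 qa a_le1 qb b_le1 q_fix.
have a_ge0 : 0 <= a := le_trans q_ge0 qa.
have b_ge0 : 0 <= b := le_trans q_ge0 qb.
have prod_le : (1 - P * a) * (1 - P * b) <= (1 - P * q) ^+ 2.
  rewrite expr2; apply: ler_pM; rewrite ?subr_ge0 ?lerB ?ler_wpM2l ?mulr_ile1 //.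
have -> : P * a + P * b - P * a * (P * b) = 1 - (1 - P * a) * (1 - P * b) by ring.
by rewrite -{1}q_fix; apply: lerB.
Qed.

Section Connectivity.
Variables (R : realType) (p : R) (n : nat).
Hypotheses (p_ge0 : 0 <= p) (p_le1 : p <= 1).
Variable q : R.
Hypotheses (q_ge0 : 0 <= q) (q_le1 : q <= 1) (q_fix : 1 - (1 - p ^+ 2 * q) ^+ 2 = q).
Local Notation cfg := (config n).

Lemma Pr_twin_path_ge h d k : (d + h)%N = n -> (2 ^ d <= k < 2 ^ d.+1)%N ->
  q <= Pr p (fun w : cfg => twin_path w h k).
Proof.
elim: h d k => [|h IH] d k dh k_range /=; first by rewrite Pr_True.
have : (2 ^ d.+2 <= 2 ^ n.+1)%N by rewrite leq_exp2l; lia.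
have pos_d : (0 < 2 ^ d)%N by rewrite expn_gt0.
move: k_range; rewrite !expnS => k_range pow_le.
have IH' m : (k.*2 <= m <= k.*2.+1)%N -> q <= Pr p (fun w : cfg => twin_path w h m).
  by move=> m_range; apply: (IH d.+1); rewrite ?expnS; lia.
rewrite (Pr_or_indep p (twin_step_depends (@twin_path_depends n h k.*2.+1))); last first.
  apply: depends_on_sub (twin_step_depends (@twin_path_depends n h k.*2)).
  by move=> e even odd; apply: below_sibling odd even; lia.
rewrite !Pr_twin_step ?expnS; try lia.
by apply: twin_recursion_ge; rewrite ?sqr_ge0 ?expr_le1 ?IH' ?Pr_le1 //; lia.
Qed.

Lemma Pr_roots_connected_ge : (0 < n)%N -> q <= Pr p (fun w : cfg => roots_connected w).
Proof.
move=> n_gt0; apply: le_trans (@Pr_twin_path_ge n 0 1 (add0n n) isT) _.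
by apply: le_Pr => // w; apply: twin_path_roots_connected.
Qed.

End Connectivity.

Lemma crossing_of_quick_route (R : realType) n (alg : algorithm n) (w : config n) (x : R) :
  (0 < n)%N -> local_alg alg -> routes_roots alg -> 0 <= x ->
  roots_connected w -> ~ at_least_queries alg w x ->
  exists t : 'I_(Num.truncn x), crossing alg t w.
Proof.
move=> n_gt0 loc route x_ge0 conn_w quick.
have [k [kx stop]] : exists k : nat, k%:R < x /\ alg (hist alg w k) = None.
  by apply: contra_notP quick => none k kx ak; apply: none; exists k.
have [k' [stop' found]] := route w.
have same : hist alg w k' = hist alg w k.
  have [kk'|k'k] := leqP k k'; first exact: hist_stop stop _ kk'.
  by apply/esym/(hist_stop stop'); apply: ltnW.
have := found conn_w; rewrite same => /(crossing_before_route n_gt0 loc) [t tk cross].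
have tx : (t < Num.truncn x)%N by apply: leq_trans tk _; rewrite truncn_ge_nat // ltW.
by exists (Ordinal tx).
Qed.

Lemma Pr_quick_route_le (R : realType) (p : R) n (alg : algorithm n) (x : R) :
  0 <= p -> p <= 1 -> (0 < n)%N -> local_alg alg -> routes_roots alg -> 0 <= x ->
  Pr p (fun w => roots_connected w /\ ~ at_least_queries alg w x) <= x * p ^+ n.
Proof.
move=> p_ge0 p_le1 n_gt0 loc route x_ge0.
apply: le_trans
  (le_Pr p_ge0 p_le1 (F := fun w => exists t : 'I_(Num.truncn x), crossing alg t w) _) _.
  by move=> w [conn_w quick]; apply: crossing_of_quick_route.
apply: le_trans (Pr_exists_le p_ge0 p_le1 _) _.
apply: le_trans (_ : \sum_(t < Num.truncn x) p ^+ n <= _).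
  by apply: ler_sum => t _; apply: Pr_crossing_le.
by rewrite sumr_const card_ord -mulr_natl; apply: ler_wpM2r; rewrite ?exprn_ge0 ?truncn_le.
Qed.

Lemma condPr_ge (R : realType) (p : R) n (A C : config n -> Prop) (q a : R) :
  0 <= p -> p <= 1 -> 0 < q -> q <= Pr p C -> Pr p (fun w => C w /\ ~ A w) <= a ->
  1 - a / q <= condPr p A C.
Proof.
move=> p_ge0 p_le1 q_gt0 qC bad.
have C_gt0 : 0 < Pr p C := lt_le_trans q_gt0 qC.
have a_ge0 : 0 <= a := le_trans (Pr_ge0 p_ge0 p_le1 _) bad.
rewrite /condPr (@eq_Pr _ p _ _ (fun w => C w /\ A w)); last by move=> w; split=> -[].
have -> : Pr p (fun w => C w /\ A w) = Pr p C - Pr p (fun w => C w /\ ~ A w).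
  by rewrite [in RHS](Pr_split p C A) addrK.
rewrite mulrBl divff ?gt_eqF //; apply: lerB => //.
apply: le_trans (_ : a / Pr p C <= _).
  by apply: ler_wpM2r => //; rewrite invr_ge0; apply: ltW.
by apply: (ler_wpM2l a_ge0); rewrite lef_pV2 ?posrE.
Qed.

(* The fixed point of [x |-> 1 - (1 - p^2 x)^2], the recursion obeyed by the probability of a
   twin path: each of the two children contributes through its two open edges. *)
Definition twin_density (R : realFieldType) (p : R) : R := (2 * p ^+ 2 - 1) / p ^+ 4.

Lemma twin_densityP (R : realFieldType) (p : R) : 0 < p -> 1 < 2 * p ^+ 2 -> p <= 1 ->
  [/\ 0 < twin_density p, twin_density p <= 1
    & 1 - (1 - p ^+ 2 * twin_density p) ^+ 2 = twin_density p].
Proof.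
move=> p_gt0 two_p2_gt1 p_le1; have p4_gt0 : 0 < p ^+ 4 by rewrite exprn_gt0.
split; first by rewrite divr_gt0 // subr_gt0.
  rewrite ler_pdivrMr // mul1r (_ : p ^+ 4 = p ^+ 2 * p ^+ 2); last by rewrite -exprD.
  by have := sqr_ge0 (p ^+ 2 - 1); nra.
by rewrite /twin_density; field; rewrite gt_eqF.
Qed.

Lemma inv_sqrt2_lt (R : rcfType) (p : R) : 1 / Num.sqrt 2 < p -> 0 < p /\ 1 < 2 * p ^+ 2.
Proof.
have sqrt2_gt0 : 0 < Num.sqrt 2 :> R by rewrite sqrtr_gt0.
move=> p_gt; split; first by apply: lt_trans p_gt; rewrite divr_gt0.
have : 1 < p * Num.sqrt 2 by rewrite -ltr_pdivrMr.
have -> : 2 * p ^+ 2 = (p * Num.sqrt 2) ^+ 2 by rewrite exprMn sqr_sqrtr // mulrC.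
by nra.
Qed.

Theorem mainTheorem6 (R : realType) (p : R) :
  1 / Num.sqrt 2 < p -> p < 1 ->
  exists c : R, 0 < c /\
    forall (a : R) (n : nat), 0 < a -> (0 < n)%N ->
    forall alg : algorithm n, local_alg alg -> routes_roots alg ->
      1 - c * a <=
      condPr p (fun w => at_least_queries alg w (a * p ^- n))
               (fun w => roots_connected w).
Proof.
move=> p_gt p_lt1; have [p_gt0 two_p2_gt1] := inv_sqrt2_lt p_gt.
have p_ge0 := ltW p_gt0; have p_le1 := ltW p_lt1.
have [q_gt0 q_le1 q_fix] := twin_densityP p_gt0 two_p2_gt1 p_le1.
exists (twin_density p)^-1; split; first by rewrite invr_gt0.
move=> a n a_gt0 n_gt0 alg loc route.
have x_ge0 : 0 <= a * p ^- n by rewrite mulr_ge0 ?invr_ge0 ?exprn_ge0 ?ltW.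
rewrite mulrC; apply: (condPr_ge p_ge0 p_le1 q_gt0).
  by apply: Pr_roots_connected_ge => //; apply: ltW.
apply: le_trans (Pr_quick_route_le p_ge0 p_le1 n_gt0 loc route x_ge0) _.
by rewrite -mulrA mulVf ?mulr1 // expf_neq0 // gt_eqF.
Qed.
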